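(* Let $L\ge1$, $M\ge2$, $\lambda>0$, $\tilde d_{\min}>0$, let ${\bm\kappa}_k=(\Phi_k,\Psi_k,\Theta_k)^T$ and ${\bm\kappa}_{k'}=(\Phi_{k'},\Psi_{k'},\Theta_{k'})^T$ be unit vectors in $\mathbb{R}^3$ with $\Delta\Phi_{k,k'}:=\Phi_k-\Phi_{k'}\neq0$, and let ${\bf q}_1,\dots,{\bf q}_L\in\mathbb{R}^3$ be arbitrary. For real antenna offsets $b_{l,m}$ ($1\le l\le L$, $1\le m\le M$) define $$\xi=\frac{1}{L^2M^2}\Big|\sum_{l=1}^L e^{\,\mathrm{j}\frac{2\pi}{\lambda}({\bm\kappa}_k-{\bm\kappa}_{k'})^T{\bf q}_l}\sum_{m=1}^M e^{\,\mathrm{j}\frac{2\pi}{\lambda}b_{l,m}\Delta\Phi_{k,k'}}\Big|^2.$$ Let $\tilde\nu_{\min}=\lceil M\tilde d_{\min}|\Delta\Phi_{k,k'}|/\lambda-1\rceil$, let $\zeta^\star=\tilde\nu_{\min}/M$ if $\mathrm{mod}(\tilde\nu_{\min}+1,M)\neq0$ and $\zeta^\star=(\tilde\nu_{\min}+1)/M$ otherwise, and set $$b_{l,m}=(m-1)\frac{(\zeta^\star+1/M)\lambda}{|\Delta\Phi_{k,k'}|}\quad\text{for all } l,m.$$ Then $\sum_{m=1}^M e^{\mathrm{j}\frac{2\pi}{\lambda}b_{l,m}\Delta\Phi_{k,k'}}=0$ for every $l$, hence $\xi=0$ regardless of ${\bf q}_1,\dots,{\bf q}_L$; moreover $b_{l,1}=0$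 and $|b_{l,m}-b_{l,m'}|\ge\tilde d_{\min}$ for all $l$ and all $m\neq m'$.
   Context: $\mathrm{j}$ is the imaginary unit, $\lceil\cdot\rceil$ the ceiling, and $\mathrm{mod}(a,b)$ the remainder of integer $a$ divided by $b$. Each of $L$ UAVs carries a linear movable-antenna array of $M$ antennas at offsets $b_{l,m}$ along the $x$-axis from the UAV's reference point ${\bf q}_l$; $\tilde d_{\min}$ is the minimum inter-antenna spacing (mutual-coupling avoidance). $\xi$ is the squared correlation coefficient of two users' far-field channels. *)

From Stdlib Require Import Reals ZArith Zfloor.
From Coquelicot Require Import Coquelicot.
Open Scope R_scope.

Definition vec3 := (R * R * R)%type.
Definition dot3 (u v : vec3) : R :=
  let '(u1, u2, u3) := u in let '(v1, v2, v3) := v in u1*v1 + u2*v2 + u3*v3.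
Definition norm3 (u : vec3) : R := sqrt (dot3 u u).
Definition sub3 (u v : vec3) : vec3 :=
  let '(u1, u2, u3) := u in let '(v1, v2, v3) := v in (u1 - v1, u2 - v2, u3 - v3).
Definition Phi (u : vec3) : R := fst (fst u).

Definition cexpj (t : R) : C := (cos t, sin t).

Definition inner_sum (M : nat) (lam dPhi : R) (b : nat -> nat -> R) (l : nat) : C :=
  sum_n_m (fun m => cexpj (2 * PI / lam * b l m * dPhi)) 1 M.

Definition xi (L M : nat) (lam : R) (kk kk' : vec3) (q : nat -> vec3)
  (b : nat -> nat -> R) : R :=
  / (INR L ^ 2 * INR M ^ 2) *
  Cmod (sum_n_m (fun l => Cmult (cexpj (2 * PI / lam * dot3 (sub3 kk kk') (q l)))
                                 (inner_sum M lam (Phi kk - Phi kk') b l)) 1 L) ^ 2.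

Definition nu_min (M : nat) (lam dmin dPhi : R) : Z :=
  Zceil (INR M * dmin * Rabs dPhi / lam - 1).

Definition zeta_star (M : nat) (lam dmin dPhi : R) : R :=
  let nu := nu_min M lam dmin dPhi in
  if negb (Z.eqb (Z.modulo (nu + 1) (Z.of_nat M)) 0)
  then IZR nu / INR M
  else (IZR nu + 1) / INR M.

(* b_{l,m} = (m-1) (zeta* + 1/M) lam / |dPhi|, for all l (m is 1-based) *)
Definition b_opt (M : nat) (lam dmin dPhi : R) (l m : nat) : R :=
  (INR m - 1) * ((zeta_star M lam dmin dPhi + / INR M) * lam / Rabs dPhi).

(* The inner sum is a geometric sum of [M] terms with ratio [e^{j 2 pi k / M}],
   where [k] is an integer with [zeta* + 1/M = k/M]. The case split defining
   [zeta*] makes [k] the least integer in [[M dmin |dPhi| / lam, +oo)] not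
   divisible by [M], so the ratio is an [M]-th root of unity different from 1
   and the sum vanishes. The same inequality on [k] says that the antenna step
   [k lam / (M |dPhi|)] is at least [dmin]. *)

From Stdlib Require Import Reals ZArith Zfloor Lra Lia.
From Coquelicot Require Import Coquelicot.
Open Scope R_scope.

Lemma cexpj_0 : cexpj 0 = 1%C.
Proof. unfold cexpj; rewrite cos_0, sin_0; reflexivity. Qed.

Lemma cexpj_add (s t : R) : cexpj (s + t) = Cmult (cexpj s) (cexpj t).
Proof.
unfold cexpj, Cmult; simpl; rewrite cos_plus, sin_plus.
f_equal; ring.
Qed.

Lemma cexpj_2PI_IZR (z : Z) : cexpj (2 * PI * IZR z) = 1%C.
Proof.
assert (Hnat : forall n : nat, cexpj (2 * PI * INR n) = 1%C).
{ intro n; unfold cexpj.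
  replace (2 * PI * INR n) with (0 + 2 * INR n * PI) by ring.
  rewrite cos_period, sin_period, cos_0, sin_0; reflexivity. }
destruct (Z_le_gt_dec 0 z) as [Hz | Hz].
- rewrite <- (Z2Nat.id z Hz), <- INR_IZR_INZ; apply Hnat.
- replace (IZR z) with (- INR (Z.to_nat (- z)))
    by (rewrite INR_IZR_INZ, Z2Nat.id, opp_IZR by lia; ring).
  generalize (Hnat (Z.to_nat (- z))); unfold cexpj.
  rewrite Ropp_mult_distr_r_reverse, cos_neg, sin_neg.
  intro E; injection E as Ec Es; rewrite Ec, Es, Ropp_0; reflexivity.
Qed.

Lemma cexpj_eq_1 (t : R) : cexpj t = 1%C -> exists z : Z, t = 2 * PI * IZR z.
Proof.
unfold cexpj; intro E; injection E as Ecos _.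
assert (Hsin : sin (t / 2) = 0).
{ replace t with (2 * (t / 2)) in Ecos by field.
  rewrite cos_2a_sin in Ecos; nra. }
apply sin_eq_0_0 in Hsin as [z Hz].
exists z; lra.
Qed.

Lemma sum_cexpj_geometric (t : R) (n : nat) :
  Cmult (sum_n_m (fun m => cexpj ((INR m - 1) * t)) 1 n) (Cminus (cexpj t) 1)
  = Cminus (cexpj (INR n * t)) 1.
Proof.
induction n as [|n IH].
- rewrite sum_n_m_zero by lia; simpl.
  rewrite Rmult_0_l, cexpj_0; change (@zero C_AbelianMonoid) with (RtoC 0); ring.
- rewrite sum_n_Sm by lia; change plus with Cplus.
  rewrite Cmult_plus_distr_r, IH, S_INR.
  replace (INR n + 1 - 1) with (INR n) by ring.
  rewrite Rmult_plus_distr_r, Rmult_1_l, cexpj_add; ring.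
Qed.

Lemma sum_cexpj_root_of_unity (n : nat) (k : Z) :
  (0 < n)%nat -> ~ (Z.of_nat n | k)%Z ->
  sum_n_m (fun m => cexpj ((INR m - 1) * (2 * PI * IZR k / INR n))) 1 n = RtoC 0.
Proof.
intros Hn Hdvd.
assert (HnR : INR n <> 0) by (apply not_0_INR; lia).
set (t := 2 * PI * IZR k / INR n).
set (S := sum_n_m _ 1 n).
assert (Hratio : Cminus (cexpj t) 1 <> 0%C).
{ apply Cminus_eq_contra; intros [z Hz]%cexpj_eq_1; apply Hdvd; exists z; apply eq_IZR.
  rewrite mult_IZR, <- INR_IZR_INZ.
  pose proof PI_RGT_0.
  apply (Rmult_eq_reg_l (2 * PI)); [|lra].
  replace (2 * PI * IZR k) with (t * INR n) by (unfold t; field; exact HnR).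
  rewrite Hz; ring. }
assert (Hfull : Cminus (cexpj (INR n * t)) 1 = 0%C).
{ replace (INR n * t) with (2 * PI * IZR k) by (unfold t; field; exact HnR).
  rewrite cexpj_2PI_IZR; ring. }
replace S with (Cdiv (Cmult S (Cminus (cexpj t) 1)) (Cminus (cexpj t) 1))
  by (field; exact Hratio).
unfold S; rewrite sum_cexpj_geometric, Hfull; unfold Cdiv; apply Cmult_0_l.
Qed.

Lemma Rsign_IZR (x : R) : x <> 0 ->
  exists s : Z, (s * s = 1)%Z /\ x = IZR s * Rabs x.
Proof.
intro Hx; destruct (Rcase_abs x) as [Hneg | Hpos].
- exists (-1)%Z; split; [reflexivity|]; rewrite Rabs_left by lra; lra.
- exists 1%Z; split; [reflexivity|]; rewrite Rabs_right by lra; lra.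
Qed.

Lemma inner_sum_uniform_array (M : nat) (lam dPhi : R) (b : nat -> nat -> R)
    (l : nat) (k : Z) :
  (0 < M)%nat -> lam <> 0 -> dPhi <> 0 -> ~ (Z.of_nat M | k)%Z ->
  (forall m, b l m = (INR m - 1) * (IZR k * lam / (INR M * Rabs dPhi))) ->
  inner_sum M lam dPhi b l = 0%C.
Proof.
intros HM Hlam HdPhi Hk Hb.
assert (HMR : INR M <> 0) by (apply not_0_INR; lia).
destruct (Rsign_IZR dPhi HdPhi) as [s [Hss Hs]].
assert (HabsR : Rabs dPhi <> 0) by (apply Rabs_no_R0, HdPhi).
unfold inner_sum.
rewrite (sum_n_m_ext _ (fun m => cexpj ((INR m - 1) * (2 * PI * IZR (k * s) / INR M)))).
- apply sum_cexpj_root_of_unity; [exact HM|].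
  intro Hks; apply Hk.
  replace k with (k * s * s)%Z by (rewrite <- Z.mul_assoc, Hss; ring).
  apply Z.divide_mul_l, Hks.
- intro m; f_equal; rewrite Hb, mult_IZR.
  rewrite Hs at 2; field; auto.
Qed.

Lemma xi_inner_sum_eq_0 (L M : nat) (lam : R) (kk kk' : vec3) (q : nat -> vec3)
    (b : nat -> nat -> R) :
  (forall l, (1 <= l <= L)%nat -> inner_sum M lam (Phi kk - Phi kk') b l = 0%C) ->
  xi L M lam kk kk' q b = 0.
Proof.
intro Hinner; unfold xi.
rewrite (sum_n_m_ext_loc _ (fun _ => zero)).
- rewrite sum_n_m_const_zero; change (@zero C_AbelianMonoid) with (RtoC 0).
  rewrite Cmod_0; ring.
- intros l Hl; rewrite Hinner by exact Hl; apply Cmult_0_r.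
Qed.

Lemma zeta_star_spec (M : nat) (lam dmin dPhi : R) : (2 <= M)%nat ->
  exists k : Z, ~ (Z.of_nat M | k)%Z /\
    INR M * dmin * Rabs dPhi / lam <= IZR k /\
    zeta_star M lam dmin dPhi + / INR M = IZR k / INR M.
Proof.
intro HM.
assert (HMR : INR M <> 0) by (apply not_0_INR; lia).
assert (Hmod : forall k : Z, (k mod Z.of_nat M <> 0)%Z -> ~ (Z.of_nat M | k)%Z)
  by (intros k Hk Hdvd; apply Hk, Z.mod_divide; [lia | exact Hdvd]).
unfold zeta_star; set (nu := nu_min M lam dmin dPhi).
assert (Hnu : IZR nu - 1 < INR M * dmin * Rabs dPhi / lam - 1 <= IZR nu)
  by apply Zceil_bound.
destruct (Z.eqb_spec ((nu + 1) mod Z.of_nat M) 0) as [E | E]; simpl.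
- exists (nu + 2)%Z; rewrite plus_IZR; split; [apply Hmod | split; [lra | field; exact HMR]].
  replace (nu + 2)%Z with ((nu + 1) + 1)%Z by ring.
  rewrite Zplus_mod, E, Z.add_0_l, Zmod_mod, Z.mod_small; lia.
- exists (nu + 1)%Z; rewrite plus_IZR.
  split; [apply Hmod, E | split; [lra | field; exact HMR]].
Qed.

Lemma dmin_le_step (M : nat) (lam dmin dPhi : R) (k : Z) :
  (0 < M)%nat -> 0 < lam -> dPhi <> 0 ->
  INR M * dmin * Rabs dPhi / lam <= IZR k ->
  dmin <= IZR k * lam / (INR M * Rabs dPhi).
Proof.
intros HM Hlam HdPhi Hk.
assert (HMpos : 0 < INR M) by (apply lt_0_INR, HM).
assert (Habs : 0 < Rabs dPhi) by (apply Rabs_pos_lt, HdPhi).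
apply Rmult_le_reg_r with (INR M * Rabs dPhi / lam);
  [apply Rdiv_lt_0_compat; [apply Rmult_lt_0_compat|]; lra|].
replace (IZR k * lam / (INR M * Rabs dPhi) * (INR M * Rabs dPhi / lam))
  with (IZR k) by (field; repeat split; lra).
replace (dmin * (INR M * Rabs dPhi / lam)) with (INR M * dmin * Rabs dPhi / lam)
  by (field; lra).
exact Hk.
Qed.

Lemma Rabs_sub_INR_ge_1 (m m' : nat) : m <> m' -> 1 <= Rabs (INR m - INR m').
Proof.
intro Hne; destruct (Nat.lt_gt_cases m m') as [[Hlt | Hgt] _]; [exact Hne | |].
- apply le_INR in Hlt; rewrite S_INR in Hlt; rewrite Rabs_left1; lra.
- apply le_INR in Hgt; rewrite S_INR in Hgt; rewrite Rabs_right; lra.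
Qed.

Lemma uniform_array_spacing (d s : R) (m m' : nat) : d <= s -> m <> m' ->
  d <= Rabs ((INR m - 1) * s - (INR m' - 1) * s).
Proof.
intros Hds Hne.
replace ((INR m - 1) * s - (INR m' - 1) * s) with ((INR m - INR m') * s) by ring.
rewrite Rabs_mult.
pose proof (Rabs_sub_INR_ge_1 m m' Hne); pose proof (Rabs_pos s).
pose proof (Rle_abs s); nra.
Qed.

Theorem mainTheorem3 (L M : nat) (lam dmin : R) (kk kk' : vec3) (q : nat -> vec3) :
  (1 <= L)%nat -> (2 <= M)%nat -> 0 < lam -> 0 < dmin ->
  norm3 kk = 1 -> norm3 kk' = 1 -> Phi kk - Phi kk' <> 0 ->
  let dPhi := Phi kk - Phi kk' in
  let b := b_opt M lam dmin dPhi in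
  (forall l : nat, (1 <= l <= L)%nat -> inner_sum M lam dPhi b l = 0%C) /\
  xi L M lam kk kk' q b = 0 /\
  (forall l : nat, (1 <= l <= L)%nat -> b l 1%nat = 0) /\
  (forall l m m' : nat, (1 <= l <= L)%nat -> (1 <= m <= M)%nat -> (1 <= m' <= M)%nat ->
     m <> m' -> dmin <= Rabs (b l m - b l m')).
Proof.
intros _ HM Hlam _ _ _ HdPhi dPhi b.
destruct (zeta_star_spec M lam dmin dPhi HM) as [k [Hk [Hbound Hzeta]]].
set (step := IZR k * lam / (INR M * Rabs dPhi)).
assert (Hb : forall l m, b l m = (INR m - 1) * step).
{ intros l m; unfold b, b_opt, step; rewrite Hzeta; field.
  split; [apply Rabs_no_R0, HdPhi | apply not_0_INR; lia]. }
assert (Hstep : dmin <= step) by (apply dmin_le_step; [lia | exact Hlam | exact HdPhi | exact Hbound]).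
assert (Hinner : forall l, inner_sum M lam dPhi b l = 0%C)
  by (intro l; apply (inner_sum_uniform_array M lam dPhi b l k);
      [lia | lra | exact HdPhi | exact Hk | intro m; apply Hb]).
repeat split.
- intros l _; apply Hinner.
- apply xi_inner_sum_eq_0; intros l _; apply Hinner.
- intros l _; rewrite Hb; simpl; ring.
- intros l m m' _ _ _ Hne; rewrite !Hb; apply uniform_array_spacing; assumption.
Qed.
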